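(* Let $I\colon T_{\mathrm{Graph}}\leadsto T$ be an open interpretation, where $T$ is a canonical theory. Let $T'$ be the theory obtained from the disjoint union $T_{\mathrm{Graph}}\cup T$ (with $E$ the predicate symbol of $T_{\mathrm{Graph}}$) by adding the axiom $\forall x\forall y\,(E(x,y)\leftrightarrow I(E)(x,y))$. Let $\mathcal{L}$ be the language of $T'$ and let $\mathcal{F}$ be a family of canonical structures on $\mathcal{L}$ such that $T'=\mathrm{Forb}_{T_{\mathcal L}}(\mathcal F)$. Then $$\chi(I)=\begin{cases}\infty, & \text{if } \mathcal{C}^E_{\mathcal L}\not\subseteq\mathcal{U}_1(\mathcal F),\\ \min\{\ell\in\mathbb{N}_+:\mathcal{T}^E_{\ell,\mathcal L}\subseteq\mathcal U_\ell(\mathcal F)\}, & \text{otherwise},\end{cases}$$ and in the second case the minimum exists (the set is non-empty). Furthermore, if $T$ itself is obtained from a theory $T_{\mathrm{Graph}}\cup T_0$ by adding axioms (so its language contains $E$) and $I$ acts identically on $E$ (i.e. $I(E)(x,y)=E(x,y)$), then the same conclusion holds with $T'$ replaced by $T$ (with $\mathcal L$ the language of $T$ and $\mathcal F$ such that $T=\mathrm{Forb}_{T_{\mathcal L}}(\mathcal F)$).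
   Context: All languages are finite first-order relational languages; each predicate $P$ has arity $k(P)\in\mathbb{N}_+$. Structures are finite and canonical (no predicate holds on a tuple with a repeated entry); $V(M)$ is the vertex set, $(V)_k$ the set of injective maps $[k]\to V$, $R_P(M)\subseteq(V(M))_{k(P)}$ the tuples satisfying $P$, $M|_U$ the induced substructure. Theories are universal and canonical. $T_{\mathcal L}$ is the theory whose models are all canonical structures on $\mathcal L$; for a family $\mathcal F$ of canonical structures on $\mathcal L$, $\mathrm{Forb}_{T_{\mathcal L}}(\mathcal F)$ is the theory whose models are the canonical structures on $\mathcal L$ with no induced substructure isomorphic to a member of $\mathcal F$. $T_1\cup T_2$ denotes the theory over the disjoint union of the languages with the axioms of both. $T_{\mathrm{Graph}}$: language $\{E\}$, $E$ binary, symmetric; models are simple graphs. An open interpretation $I\colon T_{\mathrm{Graph}}\leadsto T$ assigns to $E$ a quantifier-free formula $I(E)(x,y)$ in the language of $T$ such that $T$ proves it symmetric and irreflexive; $I(N)$ is the graph on $V(N)$ with ordered edges the injective pairs satisfying $I(E)$. $\mathcal M_n[T]$: models of $T$ on $n$ vertices up to isomorphism. $T_{n,\ell}$: complete $\ell$-partite graph on $n$ vertices with parts of sizes $\lfloor n/\ell\rfloor$ or $\lceil n/\ell\rceil$; $G\subseteq H$ means an injection $V(G)\to V(H)$ mapping edges to edges. Abstract chromatic number: $\chi(I)=\sup(\{\ell\in\mathbb{N}_+:\forall n\ \exists N\in\mathcal M_n[T],\ T_{n,\ell}\subseteq I(N)\}\cup\{0\})+1$. Split orders: an $\ell$-split order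 over $V$ is $(f,\preceq)$ with $f\colon V\to[\ell]$ and $\preceq$ a reflexive partial order on $V$ such that $v,w$ are comparable iff $f(v)=f(w)$; $\mathcal S_{\ell,V}$ is the set of these, $\mathcal S_{\ell,k}=\mathcal S_{\ell,[k]}$ (for $\ell=1$, elements of $\mathcal S_{1,V}$ are identified with total orders on $V$). For an injection $g\colon W\to V$, $w_1\preceq_g w_2\iff g(w_1)\preceq g(w_2)$. An $\ell$-Ramsey pattern on $\mathcal L$ is a map $Q\colon P\mapsto Q_P\subseteq\mathcal S_{\ell,k(P)}$; $\mathcal P_{\ell,\mathcal L}$ is the set of these. $M$ is $Q$-uniform w.r.t. $(f,\preceq)\in\mathcal S_{\ell,V(M)}$ if $R_P(M)=\{\alpha\in(V(M))_{k(P)}:(f\circ\alpha,\preceq_\alpha)\in Q_P\}$ for all $P\in\mathcal L$. $\mathcal U_\ell(M)$ is the set of $Q\in\mathcal P_{\ell,\mathcal L}$ such that $M$ is $Q$-uniform w.r.t. some $(f,\preceq)\in\mathcal S_{\ell,V(M)}$; $\mathcal U_\ell(\mathcal F)=\bigcup_{M\in\mathcal F}\mathcal U_\ell(M)$. For $E\in\mathcal L$ binary: $\mathcal C^E_{\mathcal L}$ is the set of $Q\in\mathcal P_{1,\mathcal L}$ with $Q_E=\mathcal S_{1,2}$ ($E$-complete patterns); $\mathcal T^E_{\ell,\mathcal L}$ is the set of $Q\in\mathcal P_{\ell,\mathcal L}$ with $Q_E=\{(g,\preceq)\in\mathcal S_{\ell,2}: g\text{ injective}\}$ ($E$-Turán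 patterns). *)

From mathcomp Require Import all_boot.

Set Implicit Arguments.
Unset Strict Implicit.
Unset Printing Implicit Defensive.

Record lang := Lang {
  sym : finType;
  arity : sym -> nat;
  arity_pos : forall P, 0 < arity P
}.

Definition atom (L : lang) (V : finType) :=
  {P : sym L & {ffun 'I_(arity P) -> V}}.

(* A (finite) structure on L with vertex set V: the set of all tagged tuples
   (P, alpha) with alpha in R_P(M). *)
Definition struct (L : lang) (V : finType) := {set atom L V}.

Definition holds (L : lang) (V : finType) (M : struct L V) (P : sym L)
  (t : {ffun 'I_(arity P) -> V}) : bool :=
  existT (fun P => {ffun 'I_(arity P) -> V}) P t \in M.

Definition canonical (L : lang) (V : finType) (M : struct L V) : Prop :=
  forall x, x \in M -> injective (tagged x).

(* Pull-back of M along g : W -> V; for injective g this is (an isomorphic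
   copy of) the induced substructure M|_{g(W)}. *)
Definition pull (L : lang) (V W : finType) (M : struct L V) (g : W -> V)
  : struct L W :=
  [set x : atom L W |
     existT (fun P => {ffun 'I_(arity P) -> V}) (tag x)
            [ffun i => g (tagged x i)] \in M].

(* A (canonical, universal) theory over L, represented by its finite models:
   T n N <-> N (a structure on vertex set [n]) is a model of T.
   Universal theories are exactly those whose (finite) model classes are
   closed under induced substructures (and isomorphism); canonical theories
   only have canonical models. *)
Definition is_theory (L : lang) (T : forall n, struct L 'I_n -> Prop) : Prop :=
  (forall n (N : struct L 'I_n), T n N -> canonical N) /\
  (forall n m (N : struct L 'I_n) (g : 'I_m -> 'I_n),
      T n N -> injective g -> T m (pull N g)).

Definition sfamily (L : lang) := forall m, struct L 'I_m -> Prop.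

Definition canonical_family (L : lang) (F : sfamily L) : Prop :=
  forall m (N : struct L 'I_m), F m N -> canonical N.

Definition Forb (L : lang) (F : sfamily L) (V : finType) (M : struct L V) : Prop :=
  canonical M /\
  ~ (exists m (N : struct L 'I_m) (g : 'I_m -> V),
        F m N /\ injective g /\ pull M g = N).

(* Quantifier-free formulas in the two free variables x (=0) and y (=1). *)
Inductive qf2 (L : lang) : Type :=
| QAtom (P : sym L) (f : 'I_(arity P) -> 'I_2)
| QEq (i j : 'I_2)
| QNot (p : qf2 L)
| QAnd (p q : qf2 L)
| QOr (p q : qf2 L).

Fixpoint eval_qf (L : lang) (V : finType) (M : struct L V) (env : 'I_2 -> V)
  (p : qf2 L) : bool :=
  match p with
  | QAtom P f => holds M [ffun i => env (f i)]
  | QEq i j => env i == env j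
  | QNot p => ~~ eval_qf M env p
  | QAnd p q => eval_qf M env p && eval_qf M env q
  | QOr p q => eval_qf M env p || eval_qf M env q
  end.

Definition env2 (V : Type) (a b : V) : 'I_2 -> V :=
  fun i => if val i == 0 then a else b.

(* I(E) is an open interpretation T_Graph ~> T: T proves I(E) symmetric and
   irreflexive (for universal T it suffices to check finite models). *)
Definition open_interp (L : lang) (T : forall n, struct L 'I_n -> Prop)
  (phi : qf2 L) : Prop :=
  forall n (N : struct L 'I_n), T n N ->
    forall a b : 'I_n,
      eval_qf N (env2 a b) phi = eval_qf N (env2 b a) phi /\
      ~~ eval_qf N (env2 a a) phi.

Definition interp_edge (L : lang) (V : finType) (phi : qf2 L) (M : struct L V)
  (a b : V) : bool := (a != b) && eval_qf M (env2 a b) phi.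

(* Turan graph T_{n,l} on [n]: parts are residue classes mod l
   (sizes floor(n/l) or ceil(n/l)). *)
Definition turan_edge (l n : nat) (i j : 'I_n) : bool := (i %% l != j %% l).

Definition turan_in (l n : nat) (V : finType) (H : V -> V -> bool) : Prop :=
  exists h : 'I_n -> V, injective h /\
    forall i j, turan_edge l i j -> H (h i) (h j).

Definition chi_good (L : lang) (T : forall n, struct L 'I_n -> Prop)
  (phi : qf2 L) (l : nat) : Prop :=
  forall n, exists N : struct L 'I_n, T n N /\ turan_in l n (interp_edge phi N).

(* chi_eq T phi c  <->  chi(I) = c, where c = None stands for infinity and
   chi(I) = sup({l >= 1 | chi_good l} U {0}) + 1. *)
Definition chi_eq (L : lang) (T : forall n, struct L 'I_n -> Prop)
  (phi : qf2 L) (c : option nat) : Prop :=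
  match c with
  | None => forall m, exists l, m <= l /\ 0 < l /\ chi_good T phi l
  | Some c => 0 < c /\ (c.-1 = 0 \/ chi_good T phi c.-1) /\
              (forall l, 0 < l -> chi_good T phi l -> l <= c.-1)
  end.

(* Split orders: (f, <=) with f : V -> [l] and <= a reflexive partial order
   on V such that v, w are comparable iff f v = f w. *)
Definition splitord (V : finType) (l : nat) :=
  ({ffun V -> 'I_l} * {ffun V * V -> bool})%type.

Definition is_split (V : finType) (l : nat) (s : splitord V l) : bool :=
  [forall v, s.2 (v, v)] &&
  [forall v, forall w, s.2 (v, w) && s.2 (w, v) ==> (v == w)] &&
  [forall u, forall v, forall w, s.2 (u, v) && s.2 (v, w) ==> s.2 (u, w)] &&
  [forall v, forall w, (s.2 (v, w) || s.2 (w, v)) == (s.1 v == s.1 w)].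

Definition split_pull (V : finType) (l k : nat) (s : splitord V l)
  (alpha : 'I_k -> V) : splitord 'I_k l :=
  ([ffun i => s.1 (alpha i)], [ffun p => s.2 (alpha p.1, alpha p.2)]).

Definition pattern (L : lang) (l : nat) :=
  forall P : sym L, {set splitord 'I_(arity P) l}.

Definition valid_pattern (L : lang) (l : nat) (Q : pattern L l) : Prop :=
  forall P, forall s, s \in Q P -> is_split s.

Definition uniform (L : lang) (l : nat) (V : finType) (M : struct L V)
  (Q : pattern L l) (s : splitord V l) : Prop :=
  forall P (t : {ffun 'I_(arity P) -> V}),
    holds M t = injectiveb t && (split_pull s t \in Q P).

Definition in_U (L : lang) (l : nat) (F : sfamily L) (Q : pattern L l) : Prop :=
  valid_pattern Q /\
  exists m (N : struct L 'I_m), F m N /\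
    exists s : splitord 'I_m l, is_split s /\ uniform N Q s.

Definition E_complete (L : lang) (E : sym L) (Q : pattern L 1) : Prop :=
  valid_pattern Q /\ Q E = [set s | is_split s].

Definition E_turan (L : lang) (E : sym L) (l : nat) (Q : pattern L l) : Prop :=
  valid_pattern Q /\ Q E = [set s | is_split s && injectiveb s.1].

Definition C_sub_U1 (L : lang) (E : sym L) (F : sfamily L) : Prop :=
  forall Q : pattern L 1, E_complete E Q -> in_U F Q.

Definition T_sub_U (L : lang) (E : sym L) (F : sfamily L) (l : nat) : Prop :=
  forall Q : pattern L l, E_turan E Q -> in_U F Q.

Definition chi_formula (L : lang) (E : sym L) (F : sfamily L)
  (L' : lang) (T : forall n, struct L' 'I_n -> Prop) (phi : qf2 L') : Prop :=
  (~ C_sub_U1 E F -> chi_eq T phi None) /\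
  (C_sub_U1 E F ->
     exists l, (0 < l /\ T_sub_U E F l) /\
       (forall l', 0 < l' -> T_sub_U E F l' -> l <= l') /\
       chi_eq T phi (Some l)).

(* The language L0 + {E}: E is None (binary), P in L0 is Some P. *)
Lemma langE_arity_pos (L0 : lang) :
  forall o : option (sym L0), 0 < (if o is Some P then arity P else 2).
Proof. by case=> [P|] //; apply: arity_pos. Qed.

Definition langE (L0 : lang) : lang :=
  @Lang (option (sym L0)) (fun o => if o is Some P then arity P else 2)
        (@langE_arity_pos L0).

Definition reduct (L0 : lang) (V : finType) (M : struct (langE L0) V)
  : struct L0 V :=
  [set x : atom L0 V | @holds (langE L0) V M (Some (tag x)) (tagged x)].

Definition Eholds (L0 : lang) (V : finType) (M : struct (langE L0) V) (a b : V)
  : bool := @holds (langE L0) V M None [ffun i : 'I_2 => env2 a b i].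

(* Models of T' = (T_Graph U T) + forall x y (E(x,y) <-> I(E)(x,y)). *)
Definition modelT' (L0 : lang) (T : forall n, struct L0 'I_n -> Prop)
  (phi : qf2 L0) n (M : struct (langE L0) 'I_n) : Prop :=
  canonical M /\
  (forall a b, Eholds M a b = Eholds M b a) /\
  T n (reduct M) /\
  (forall a b, Eholds M a b = eval_qf (reduct M) (env2 a b) phi).

Definition Eformula (L : lang) (E : sym L) : qf2 L :=
  QAtom (fun i : 'I_(arity E) => @inord 1 (val i)).

(* Both parts reduce to the case T = Forb(F) over a language with a binary
   symbol E and I(E) = E ([chi_formula_forb]): expanding a model of T by
   E := I(E) gives a model of T', its reduct recovers it, and the graph is
   unchanged, so T and T' have the same chi ([chi_good_expansion]).

   A pattern Q outside U_l(F) gives F-free structures: the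
   Q-uniform structure over any split order ([uniform_struct_Forb]).  Over
   the split order of a colouring an E-Turan pattern produces the complete
   multipartite graph of the colouring, an E-complete one the complete graph.

   By the finite Ramsey theorem for subsequences of nat
   ([ramsey]), a long array of vertices in a canonical structure contains an
   l x m grid on which the structure is uniform w.r.t. the grid split order,
   with a pattern coming from finitely many colours ([uniform_subgrid]).
   Every split order embeds into the grid by ranks ([rank_emb]), so a grid
   pattern realised in F embeds a member of F ([Forb_subgrid]).  This bounds
   E-cliques when C^E is in U_1(F) ([no_large_clique]) and blow-ups of K_l
   when moreover T^E_l is in U_l(F) ([no_large_blowup]), giving chi <= l. *)

From mathcomp Require Import all_boot zify.
From Stdlib Require Import Classical.

Set Implicit Arguments.
Unset Strict Implicit.
Unset Printing Implicit Defensive.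

(* Every element of a sequence is counted once, under its colour [f z]. *)
Lemma size_sum_count (C : finType) (f : nat -> C) (Z : seq nat) :
  size Z = \sum_(c : C) count (fun z => f z == c) Z.
Proof.
elim: Z => [|z Z IH] /=; first by rewrite big1.
rewrite big_split /= -IH (bigD1 (f z)) //= eqxx big1 ?addn0 ?add1n // => c /negbTE.
by rewrite eq_sym => ->.
Qed.

Lemma pigeonhole (C : finType) (f : nat -> C) (Z : seq nat) m (c1 : C) :
  #|C| * m <= size Z -> exists c, m <= count (fun z => f z == c) Z.
Proof.
move=> hZ; case: (pickP (fun c => m <= count (fun z => f z == c) Z)) => [c hc|none].
  by exists c.
exfalso; case: m hZ none => [|m] hZ none; first by have := none c1.
have small : size Z <= #|C| * m.
  rewrite (size_sum_count f) -sum_nat_const; apply: leq_sum => c _.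
  by rewrite -ltnS ltnNge none.
have : 0 < #|C| by apply/card_gt0P; exists c1.
by move: hZ small; nia.
Qed.

Definition homogeneous (C : Type) (col : seq nat -> C) K (Y : seq nat) (c : C) :=
  forall s, subseq s Y -> size s = K -> col s = c.

Definition ramsey_bound (C : Type) K m R :=
  forall (X : seq nat) (col : seq nat -> C), R <= size X ->
  exists Y, [/\ subseq Y X, size Y = m & exists c, homogeneous col K Y c].

(* Erdos-Rado step: from Ramsey for [K]-subsequences, long subsequences in
   which the colour of [z :: s] only depends on the first element [z]. *)
Lemma end_homogeneous (C : Type) K :
  (forall m, exists R, ramsey_bound C K m R) ->
  forall j, exists H, forall (X : seq nat) (col : seq nat -> C), H <= size X ->
    exists Z (f : nat -> C), [/\ subseq Z X, size Z = j &
      forall z s, subseq (z :: s) Z -> size s = K -> col (z :: s) = f z].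
Proof.
move=> IH; elim=> [|j [H hH]].
  exists 0 => X col _; exists [::], (fun _ => col [::]); split => //.
  exact: sub0seq.
have [R' hR'] := IH H.
exists R'.+1 => X col; case: X => [|x X'] //= hX.
have [Y' [sY' zY' [c0 hc0]]] := hR' X' (fun s => col (x :: s)) hX.
have [Z' [f [sZ' zZ' hZ']]] := hH Y' col (eq_leq (esym zY')).
exists (x :: Z'), (fun z => if z == x then c0 else f z); split.
- by rewrite /= eqxx (subseq_trans sZ' sY').
- by rewrite /= zZ'.
move=> z s /=; case: eqP => [-> hs hK|nzx hs hK].
  exact: (hc0 s (subseq_trans hs sZ') hK).
exact: hZ'.
Qed.

Lemma ramsey (C : finType) K m : exists R, ramsey_bound C K m R.
Proof.
elim: K m => [|K IH] m.
  exists m => X col hX; exists (take m X); split.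
  - exact: take_subseq.
  - exact: size_takel.
  by exists (col [::]) => s _ /size0nil ->.
have [H hH] := end_homogeneous IH (#|C| * m).
exists H => X col hX.
have [Z [f [sZ zZ hZ]]] := hH X col hX.
have [c hc] := pigeonhole f (col [::]) (eq_leq (esym zZ)).
pose Zc := [seq z <- Z | f z == c].
exists (take m Zc); split.
- exact: subseq_trans (take_subseq _ _) (subseq_trans (filter_subseq _ _) sZ).
- by rewrite size_takel // size_filter.
exists c => [[|z s]] // hs [hK].
have hzs : subseq (z :: s) Zc := subseq_trans hs (take_subseq _ _).
have : z \in Zc by apply: (mem_subseq hzs); rewrite mem_head.
rewrite mem_filter => /andP[/eqP <- _].
by apply: hZ => //; apply: subseq_trans hzs (filter_subseq _ _).
Qed.

Lemma uniform_bound (X : finType) (P : X -> nat -> Prop) :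
  (forall x, exists n, P x n) -> (forall x n n', n <= n' -> P x n -> P x n') ->
  exists B, forall x, P x B.
Proof.
move=> h1 h2.
suff [B hB] : exists B, forall x, x \in enum X -> P x B.
  by exists B => x; apply: hB; rewrite mem_enum.
elim: (enum X) => [|x s [B hB]]; first by exists 0.
have [n hn] := h1 x.
exists (maxn n B) => y; rewrite inE => /orP[/eqP ->|hy].
  exact: h2 (leq_maxl _ _) hn.
exact: h2 (leq_maxr _ _) (hB _ hy).
Qed.

Lemma least_witness (P : nat -> Prop) n :
  P n -> exists k, P k /\ forall k', P k' -> k <= k'.
Proof.
elim: n {-2}n (leqnn n) => [|N IH] n hn Pn.
  by exists n; split => // k' _; move: hn; rewrite leqn0 => /eqP ->.
case: (classic (exists k, k < n /\ P k)) => [[k [hk Pk]]|hno].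
  by apply: (IH k) => //; rewrite -ltnS (leq_trans hk hn).
exists n; split => // k' Pk'; rewrite leqNgt; apply/negP => h.
by apply: hno; exists k'.
Qed.

Lemma splitP (V : finType) l (s : splitord V l) :
  reflect [/\ forall v, s.2 (v, v),
     forall v w, s.2 (v, w) -> s.2 (w, v) -> v = w,
     forall u v w, s.2 (u, v) -> s.2 (v, w) -> s.2 (u, w) &
     forall v w, (s.2 (v, w) || s.2 (w, v)) = (s.1 v == s.1 w)] (is_split s).
Proof.
apply: (iffP idP).
  move=> /andP[/andP[/andP[/forallP h1 /forallP h2] /forallP h3] /forallP h4]; split.
  - exact: h1.
  - move=> v w a b; move/forallP: (h2 v) => /(_ w) /implyP.
    by rewrite a b => /(_ isT) /eqP.
  - move=> u v w a b; move/forallP: (h3 u) => /(_ v) /forallP /(_ w) /implyP.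
    by rewrite a b => /(_ isT).
  - by move=> v w; move/forallP: (h4 v) => /(_ w) /eqP.
case=> h1 h2 h3 h4; apply/andP; split; [apply/andP; split; [apply/andP; split|]|].
- by apply/forallP.
- apply/forallP => v; apply/forallP => w; apply/implyP => /andP[a b].
  by rewrite (h2 _ _ a b).
- apply/forallP => u; apply/forallP => v; apply/forallP => w.
  by apply/implyP => /andP[a b]; apply: h3 a b.
- by apply/forallP => v; apply/forallP => w; rewrite h4.
Qed.

Lemma split_pull_split (V : finType) l k (s : splitord V l) (alpha : 'I_k -> V) :
  is_split s -> injective alpha -> is_split (split_pull s alpha).
Proof.
move=> /splitP[h1 h2 h3 h4] hinj; apply/splitP; rewrite /split_pull /=; split.
- by move=> v; rewrite ffunE.
- by move=> v w; rewrite !ffunE /= => a b; apply: hinj; apply: h2.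
- by move=> u v w; rewrite !ffunE /=; apply: h3.
- by move=> v w; rewrite !ffunE /= h4.
Qed.

Lemma split_pull_comp (V : finType) j l k (s : splitord V l) (g : 'I_j -> V)
  (t : 'I_k -> 'I_j) :
  split_pull s [ffun i => g (t i)] = split_pull (split_pull s g) t.
Proof. by congr pair; apply/ffunP => x; rewrite !ffunE. Qed.

Lemma injectiveb_comp (V W : finType) k (g : W -> V) (t : 'I_k -> W) :
  injective g -> injectiveb [ffun i => g (t i)] = injectiveb (finfun t).
Proof.
move=> hg; apply/injectiveP/injectiveP => h i j.
  by rewrite !ffunE => e; apply: h; rewrite !ffunE e.
by rewrite !ffunE => /hg e; apply: h; rewrite !ffunE e.
Qed.

Definition colour_split n l (col : {ffun 'I_n -> 'I_l}) : splitord 'I_n l :=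
  (col, [ffun p => (col p.1 == col p.2) && (p.1 <= p.2)]).

Lemma colour_split_split n l (col : {ffun 'I_n -> 'I_l}) : is_split (colour_split col).
Proof.
apply/splitP; rewrite /colour_split /=; split.
- by move=> v; rewrite ffunE /= eqxx leqnn.
- move=> v w; rewrite !ffunE /= => /andP[_ a] /andP[_ b].
  by apply: val_inj; apply/eqP; rewrite eqn_leq a b.
- move=> u v w; rewrite !ffunE /= => /andP[/eqP -> a] /andP[-> b] /=.
  exact: leq_trans a b.
- move=> v w; rewrite !ffunE /= eq_sym.
  by case: (col w == col v) => //=; apply: leq_total.
Qed.

Definition grid_split l m : splitord ('I_l * 'I_m)%type l :=
  ([ffun v : 'I_l * 'I_m => v.1],
   [ffun p : ('I_l * 'I_m) * ('I_l * 'I_m) => (p.1.1 == p.2.1) && (p.1.2 <= p.2.2)]).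

Lemma grid_split_split l m : is_split (grid_split l m).
Proof.
apply/splitP; rewrite /grid_split /=; split.
- by move=> v; rewrite ffunE /= eqxx leqnn.
- move=> [v1 v2] [w1 w2]; rewrite !ffunE /= => /andP[/eqP -> a] /andP[_ b].
  by congr pair; apply: val_inj; apply/eqP; rewrite eqn_leq a b.
- move=> u v w; rewrite !ffunE /= => /andP[/eqP -> a] /andP[-> b] /=.
  exact: leq_trans a b.
- move=> v w; rewrite !ffunE /= eq_sym.
  by case: (w.1 == v.1) => //=; apply: leq_total.
Qed.

(* Every split order on [k] is the pull-back of the grid split order on
   [l] x [m] (m >= k) along the embedding sending [v] to its part and its rank
   (number of strict predecessors) in that part. *)
Section RankEmbedding.
Variables (k l m : nat) (s : splitord 'I_k l).
Hypothesis s_split : is_split s.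
Hypothesis k_le_m : k <= m.

Definition rank (v : 'I_k) := #|[set w | s.2 (w, v) && (w != v)]|.

Lemma rank_lt v : rank v < m.
Proof.
apply: leq_trans k_le_m; rewrite /rank -[X in _ < X](card_ord k) -cardsT.
apply: proper_card; apply/properP; split; first exact: subsetT.
by exists v => //; rewrite inE eqxx andbF.
Qed.

Definition rank_emb (v : 'I_k) : 'I_l * 'I_m := (s.1 v, Ordinal (rank_lt v)).

Lemma rank_order v w : s.2 (v, w) = (s.1 v == s.1 w) && (rank v <= rank w).
Proof.
case/splitP: s_split => h1 h2 h3 h4.
case vw: (s.2 (v, w)).
  have -> : s.1 v == s.1 w by rewrite -h4 vw.
  rewrite /= /rank; symmetry; apply: subset_leq_card; apply/subsetP => u.
  rewrite !inE => /andP[a b]; rewrite (h3 _ _ _ a vw) /=.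
  apply/eqP => euw; move: a; rewrite euw => a.
  by move/negP: b; apply; apply/eqP; rewrite euw; apply: h2.
case ec: (s.1 v == s.1 w) => //=.
have wv : s.2 (w, v) by move: (h4 v w); rewrite vw ec.
have nwv : w != v by apply/eqP => e; move: vw; rewrite e h1.
symmetry; apply/negbTE; rewrite -ltnNge /rank; apply: proper_card.
apply/properP; split; last by exists w; rewrite !inE ?wv ?nwv // eqxx andbF.
apply/subsetP => u; rewrite !inE => /andP[a b]; rewrite (h3 _ _ _ a wv) /=.
by apply/eqP => euv; move: a; rewrite euv => a; move: vw; rewrite a.
Qed.

Lemma rank_emb_inj : injective rank_emb.
Proof.
move=> v w [e1 e2]; case/splitP: s_split => h1 h2 _ _.
by apply: h2; rewrite rank_order e1 eqxx /= ?e2 // -e2.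
Qed.

Lemma rank_emb_pull : split_pull (grid_split l m) rank_emb = s.
Proof.
move: rank_order; rewrite /rank_emb; case: s s_split => s1 s2 _ ho.
rewrite /split_pull /grid_split /=; congr pair; apply/ffunP => x; rewrite !ffunE //=.
by case: x => v w /=; rewrite ho.
Qed.
End RankEmbedding.

Lemma grid_index_lt m i i' j j' : j < m -> j' < m ->
  (i * m + j < i' * m + j') = (i < i') || ((i == i') && (j < j')).
Proof.
move=> hj hj'; case: (ltngtP i i') => h /=.
- apply/idP; nia.
- apply/negbTE; rewrite -leqNgt; nia.
- by subst; rewrite ltn_add2l.
Qed.

Lemma grid_index_inj m i i' j j' : j < m -> j' < m ->
  i * m + j = i' * m + j' -> i = i' /\ j = j'.
Proof. move=> hj hj' e; have ei : i = i' by nia. by subst; lia. Qed.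

Lemma count_codom k (f : 'I_k -> nat) x : injective f ->
  count (fun y => y \in codom f) (iota 0 x) = \sum_(r : 'I_k) (f r < x).
Proof.
move=> hf; elim: x => [|x IH]; first by rewrite big1.
rewrite -addn1 iotaD count_cat IH /= addn0 add0n.
rewrite [RHS](eq_bigr (fun r => (f r < x) + (f r == x))); last first.
  by move=> r _; rewrite addn1 ltnS leq_eqVlt orbC; case: ltngtP.
rewrite big_split /=; congr addn.
case: (boolP (x \in codom f)) => [/codomP[r ->]|hx].
  rewrite (bigD1 r) //= eqxx big1 // => r' /negbTE hr'.
  by apply/eqP; rewrite eqb0; apply/negP => /eqP /hf e; move: hr'; rewrite e eqxx.
rewrite big1 // => r _; apply/eqP; rewrite eqb0; apply/negP => /eqP e.
by move: hx; rewrite -e codom_f.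
Qed.

Lemma nth_filter_iota (A : pred nat) N x : A x -> x < N ->
  count A (iota 0 x) < size (filter A (iota 0 N)) /\
  nth 0 (filter A (iota 0 N)) (count A (iota 0 x)) = x.
Proof.
move=> Ax xN.
have -> : iota 0 N = iota 0 x ++ x :: iota x.+1 (N - x.+1).
  by rewrite -{1}(subnKC (ltnW xN)) iotaD add0n -(subnSK xN).
rewrite filter_cat /= Ax size_cat /= nth_cat size_filter ltnn subnn /=.
by split => //; rewrite addnS ltnS leq_addr.
Qed.

Lemma pad_subseq (Y : seq nat) N K k (f : 'I_k -> nat) :
  injective f -> (forall r, f r < N) -> k <= K -> N + K <= size Y ->
  exists S, [/\ subseq S Y, size S = K &
    forall r, nth 0 S (count (fun y => y \in codom f) (iota 0 (f r))) = nth 0 Y (f r)].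
Proof.
move=> finj fN kK hY; set A := fun y => y \in codom f.
have cntN : count A (iota 0 N) = k.
  rewrite count_codom // (eq_bigr (fun _ => 1)) ?sum1_card ?card_ord // => r _.
  by rewrite fN.
pose D := filter A (iota 0 N) ++ iota N (K - k).
have sizeD : size D = K by rewrite size_cat size_filter cntN size_iota subnKC.
exists (map (nth 0 Y) D); split.
- rewrite -[X in subseq _ X](mkseq_nth 0 Y); apply: map_subseq.
  rewrite -(subnKC (leq_trans (leq_addr K N) hY)) iotaD add0n.
  apply: cat_subseq; first exact: filter_subseq.
  have hKk : K - k <= size Y - N by move: hY; lia.
  by rewrite -(subnKC hKk) iotaD prefix_subseq.
- by rewrite size_map sizeD.
move=> r; have [h1 h2] := nth_filter_iota (codom_f f r) (fN r).
have hpos : count A (iota 0 (f r)) < size D by rewrite size_cat (leq_trans h1) ?leq_addr.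
by rewrite (nth_map 0) // nth_cat h1 h2.
Qed.

Definition uniform_struct (L : lang) l (V : finType) (Q : pattern L l)
  (s : splitord V l) : struct L V :=
  [set x : atom L V | injectiveb (tagged x) && (split_pull s (tagged x) \in Q (tag x))].

Lemma holds_uniform_struct (L : lang) l (V : finType) (Q : pattern L l)
  (s : splitord V l) P t :
  holds (uniform_struct Q s) (P := P) t = injectiveb t && (split_pull s t \in Q P).
Proof. by rewrite /holds inE. Qed.

Lemma holds_pull (L : lang) (V W : finType) (M : struct L V) (g : W -> V) P t :
  holds (pull M g) (P := P) t = holds M [ffun i => g (t i)].
Proof. by rewrite /holds inE. Qed.

Lemma holds_inj (L : lang) (V : finType) (M : struct L V) P t :
  canonical M -> holds M (P := P) t -> injective t.
Proof. by move=> hM h; apply: (hM _ h). Qed.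

Lemma uniform_struct_Forb (L : lang) l n (F : sfamily L) (Q : pattern L l)
  (s : splitord 'I_n l) :
  valid_pattern Q -> is_split s -> ~ in_U F Q -> Forb F (uniform_struct Q s).
Proof.
move=> vQ ss nU; split.
  by move=> x; rewrite inE => /andP[/injectiveP h _].
case=> m [N [g [FN [ig eN]]]]; apply: nU; split => //.
exists m, N; split => //; exists (split_pull s g); split.
  exact: split_pull_split.
move=> P t; rewrite -eN holds_pull holds_uniform_struct injectiveb_comp //.
by rewrite split_pull_comp ffunK.
Qed.

Section Grid.
Variables (L : lang) (l m : nat).

Definition grid_index (v : 'I_l * 'I_m) : nat := v.1 * m + v.2.

Lemma grid_index_bound v : grid_index v < l * m.
Proof. by case: v => [[i hi] [j hj]]; rewrite /grid_index /=; nia. Qed.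

Lemma grid_index_injective : injective grid_index.
Proof.
move=> [i j] [i' j'] /grid_index_inj [] // ei ej.
by congr pair; apply: val_inj.
Qed.

Definition grid_uniform (V : finType) (M : struct L V) (b : 'I_l * 'I_m -> V)
  (Q : pattern L l) : Prop :=
  forall P (t : {ffun 'I_(arity P) -> 'I_l * 'I_m}),
    holds M [ffun r => b (t r)] = injectiveb t && (split_pull (grid_split l m) t \in Q P).

Lemma grid_uniform_pattern (V : finType) (M : struct L V) b Q P
  (s : splitord 'I_(arity P) l) (ss : is_split s) (hkm : arity P <= m) :
  grid_uniform M b Q -> holds M [ffun r => b (rank_emb s hkm r)] = (s \in Q P).
Proof.
move=> hb; pose t := [ffun r => rank_emb s hkm r].
have tinj : injectiveb t.
  by apply/injectiveP => x y; rewrite !ffunE; apply: (rank_emb_inj ss).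
have et : split_pull (grid_split l m) t = s.
  by rewrite -[RHS](rank_emb_pull ss hkm); congr pair; apply/ffunP => r; rewrite !ffunE.
transitivity (holds M [ffun r => b (t r)]).
  by congr holds; apply/ffunP => r; rewrite !ffunE.
by rewrite hb tinj et.
Qed.
End Grid.

Definition realised_within (L : lang) l (F : sfamily L) (Q : pattern L l) n : Prop :=
  exists m (N : struct L 'I_m) (s : splitord 'I_m l),
    [/\ m <= n, F m N, is_split s & uniform N Q s].

Lemma in_U_realised (L : lang) l (F : sfamily L) (Q : pattern L l) :
  in_U F Q -> exists n, realised_within F Q n.
Proof. by case=> _ [m [N [FN [s [ss us]]]]]; exists m, m, N, s. Qed.

Lemma realised_within_mono (L : lang) l (F : sfamily L) (Q : pattern L l) n n' :
  n <= n' -> realised_within F Q n -> realised_within F Q n'.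
Proof. by move=> le [m [N [s [hm FN ss us]]]]; exists m, N, s; split => //; lia. Qed.

(* A uniform grid with a pattern realised in [F] on at most [m] vertices
   contains a copy of a member of [F]: embed it by the rank embedding. *)
Lemma grid_uniform_not_Forb (L : lang) l m (F : sfamily L) n (M : struct L 'I_n)
  (b : 'I_l * 'I_m -> 'I_n) (Q : pattern L l) :
  injective b -> grid_uniform M b Q -> realised_within F Q m -> ~ Forb F M.
Proof.
move=> binj hb [m' [N [s [hm FN ss uN]]]] [_]; apply.
exists m', N, (fun v => b (rank_emb s hm v)); split => //; split.
  by move=> v w /binj /(rank_emb_inj ss).
apply/setP => -[P t].
rewrite -[_ \in pull _ _]/(holds (pull M _) t) -[_ \in N]/(holds N t) holds_pull uN.
have -> : [ffun i => b (rank_emb s hm (t i))]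
          = [ffun r => b ([ffun i => rank_emb s hm (t i)] r)].
  by apply/ffunP => r; rewrite !ffunE.
rewrite hb injectiveb_comp ?ffunK; last exact: (rank_emb_inj ss).
by rewrite split_pull_comp (rank_emb_pull ss).
Qed.

Definition array_inj n l (a : 'I_l -> nat -> 'I_n) R : Prop :=
  forall i i' y y', y < R -> y' < R -> a i y = a i' y' -> i = i' /\ y = y'.

Section Colours.
Variables (L : lang) (l : nat).

Definition max_arity := \max_(P : sym L) arity P.

Definition grid_colour := struct L ('I_l * 'I_max_arity.+1)%type.

(* Position of [r] when [k] is listed part by part, each part in its order. *)
Definition position k (p : splitord 'I_k l) (r : 'I_k) : nat :=
  \sum_(r' : 'I_k) ((p.1 r' < p.1 r) || ((p.1 r' == p.1 r) && p.2 (r', r) && (r' != r))).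

Lemma position_lt k (p : splitord 'I_k l) r : position p r < k.
Proof.
rewrite /position (bigD1 r) //= ltnn !eqxx andbF add0n.
have k0 : 0 < k := leq_ltn_trans (leq0n r) (ltn_ord r).
apply: (@leq_ltn_trans #|predC1 r|); last by rewrite cardC1 card_ord prednK.
rewrite -sum1_card; apply: leq_sum => r' _; exact: leq_b1.
Qed.

Definition colour_pattern (c : grid_colour) : pattern L l := fun P =>
  [set p : splitord 'I_(arity P) l | is_split p &&
     holds c [ffun r => (p.1 r, (inord (position p r) : 'I_max_arity.+1))]].

Lemma colour_pattern_valid c : valid_pattern (colour_pattern c).
Proof. by move=> P s; rewrite inE => /andP[]. Qed.

Lemma position_count m k (t : {ffun 'I_k -> 'I_l * 'I_m}) r : injective t ->
  position (split_pull (grid_split l m) t) r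
  = count (fun y => y \in codom (fun r => grid_index (t r))) (iota 0 (grid_index (t r))).
Proof.
move=> tinj; rewrite count_codom; last by move=> x y /grid_index_injective /tinj.
apply: eq_bigr => r' _; rewrite /grid_index /split_pull /grid_split /= !ffunE /=.
rewrite grid_index_lt // val_eqE.
case: (eqVneq (t r').1 (t r).1) => [e1|e1] /=; last by rewrite orbF.
rewrite e1 ltnn /=; case: (eqVneq r' r) => [->|ne]; first by rewrite ltnn leqnn.
rewrite ltn_neqAle andbC; have -> // : (t r').2 != (t r).2 :> nat.
apply/eqP => e2; move/eqP: ne; apply; apply: tinj.
by apply: injective_projections => //; apply: val_inj.
Qed.

(* The colour of a set [S] of
   [max_arity + 1] columns is the structure induced on those columns. *)
Lemma uniform_subgrid m : exists R, forall n (M : struct L 'I_n), canonical M ->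
  forall a : 'I_l -> nat -> 'I_n, array_inj a R ->
  exists (c : grid_colour) (b : 'I_l * 'I_m -> 'I_n),
    [/\ injective b, forall v, exists2 y, y < R & b v = a v.1 y &
        grid_uniform M b (colour_pattern c)].
Proof.
set K := max_arity.+1; set N := l * m.
have [R hR] := ramsey grid_colour K (N + K).
exists R => n M cM a ainj.
pose col (S : seq nat) : grid_colour :=
  pull M (fun v : 'I_l * 'I_K => a v.1 (nth 0 S v.2)).
have [Y [sY zY [c hc]]] := hR (iota 0 R) col (eq_leq (esym (size_iota 0 R))).
have uY : uniq Y := subseq_uniq sY (iota_uniq 0 R).
have YR x : x \in Y -> x < R by move/(mem_subseq sY); rewrite mem_iota.
have idxY (v : 'I_l * 'I_m) : grid_index v < size Y.
  by rewrite zY ltn_addr // grid_index_bound.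
pose b (v : 'I_l * 'I_m) := a v.1 (nth 0 Y (grid_index v)).
have bR (v : 'I_l * 'I_m) : nth 0 Y (grid_index v) < R by apply: YR; apply: mem_nth.
exists c, b; split.
- move=> v w /(ainj _ _ _ _ (bR v) (bR w)) [_ /eqP].
  by rewrite nth_uniq // => /eqP /grid_index_injective.
- by move=> v; exists (nth 0 Y (grid_index v)).
move=> P t; case: (boolP (injectiveb t)) => [/injectiveP tinj|tni] /=; last first.
  apply/negP => /(holds_inj cM) hinj; move/injectiveP: tni; apply => x y e.
  by apply: hinj; rewrite !ffunE e.
have kK : arity P < K by rewrite ltnS; exact: (leq_bigmax (F := fun P : sym L => arity P) P).
have finj : injective (fun r => grid_index (t r)).
  by move=> x y /grid_index_injective /tinj.
have [S [sS zS hS]] :=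
  pad_subseq finj (fun r => grid_index_bound (t r)) (ltnW kK) (eq_leq (esym zY)).
rewrite inE split_pull_split ?grid_split_split //= -(hc S sS zS) holds_pull.
congr holds; apply/ffunP => r; rewrite !ffunE /= inordK; last first.
  exact: leq_trans (position_lt _ r) (ltnW kK).
by rewrite position_count // hS.
Qed.
End Colours.

(* If every pattern of a class [K] is realised in [F], then in an [F]-free
   structure every long enough array contains a uniform [l] x [m] grid whose
   pattern is outside [K]: a pattern in [K] would be realised on boundedly
   many vertices (finitely many colours), hence embed a member of [F]. *)
Lemma Forb_subgrid (L : lang) l (F : sfamily L) (K : pattern L l -> Prop) :
  (forall Q, K Q -> in_U F Q) -> exists B, forall m, B <= m ->
  exists R, forall n (M : struct L 'I_n), Forb F M ->
  forall a : 'I_l -> nat -> 'I_n, array_inj a R ->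
  exists (Q : pattern L l) (b : 'I_l * 'I_m -> 'I_n),
    [/\ valid_pattern Q, injective b, forall v, exists2 y, y < R & b v = a v.1 y,
        grid_uniform M b Q & ~ K Q].
Proof.
move=> hK; have [B hB] : exists B, forall c : grid_colour L l,
    K (colour_pattern c) -> realised_within F (colour_pattern c) B.
  apply: uniform_bound => [c|c n n' le h /h]; last exact: realised_within_mono.
  case: (classic (K (colour_pattern c))) => [/hK /in_U_realised [n hn]|nK].
    by exists n.
  by exists 0.
exists B => m hBm; have [R hR] := uniform_subgrid L l m.
exists R => n M FM a ainj; have [c [b [binj hba hb]]] := hR n M FM.1 a ainj.
exists (colour_pattern c), b; split => //; first exact: colour_pattern_valid.
by move/hB/(realised_within_mono hBm) => hr; apply: (grid_uniform_not_Forb binj hb hr FM).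
Qed.

Definition forb_theory (L : lang) (F : sfamily L) : forall n, struct L 'I_n -> Prop :=
  fun n M => Forb F M.

Section BinaryRelation.
Variables (L : lang) (E : sym L).
Hypothesis E_binary : arity E = 2.

Definition edge (V : finType) (M : struct L V) (a b : V) : bool :=
  eval_qf M (env2 a b) (Eformula E).

Definition e0 : 'I_(arity E) := cast_ord (esym E_binary) ord0.
Definition e1 : 'I_(arity E) := cast_ord (esym E_binary) ord_max.

Lemma e1_neq_e0 : (e1 == e0) = false. Proof. by []. Qed.

Lemma arity_E_cases (r : 'I_(arity E)) : r = e0 \/ r = e1.
Proof.
have : val r < 2 by rewrite -[X in _ < X]E_binary ltn_ord.
by case: r => [[|[|x]] h] //= _; [left|right]; apply: val_inj.
Qed.

Lemma edgeE (V : finType) (M : struct L V) (t : {ffun 'I_(arity E) -> V}) :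
  holds M t = edge M (t e0) (t e1).
Proof.
rewrite /edge /=; congr holds; apply/ffunP => r; rewrite ffunE /env2.
by case: (arity_E_cases r) => ->; rewrite -[\val _]/(nat_of_ord _) inordK.
Qed.

Definition epair (V : Type) (x y : V) : {ffun 'I_(arity E) -> V} :=
  [ffun r => if r == e0 then x else y].

Lemma edge_epair (V : finType) (M : struct L V) x y : edge M x y = holds M (epair x y).
Proof. by rewrite edgeE !ffunE eqxx e1_neq_e0. Qed.

Lemma injectiveb_E (X : eqType) (t : {ffun 'I_(arity E) -> X}) :
  injectiveb t = (t e0 != t e1).
Proof.
apply/injectiveP/idP => [h|h x y].
  by apply/eqP => /h /eqP; rewrite eq_sym e1_neq_e0.
by case: (arity_E_cases x) => ->; case: (arity_E_cases y) => -> // e;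
  move: h; rewrite e eqxx.
Qed.

Lemma edge_irrefl (V : finType) (M : struct L V) x : canonical M -> edge M x x = false.
Proof.
move=> cM; rewrite edge_epair; apply/negP => /(holds_inj cM)/injectiveP.
by rewrite injectiveb_E !ffunE eqxx e1_neq_e0 eqxx.
Qed.

Section GridEdges.
Variables (l m n : nat) (M : struct L 'I_n) (b : 'I_l * 'I_m -> 'I_n) (Q : pattern L l).
Hypothesis M_uniform : grid_uniform M b Q.

Lemma grid_edge_pattern s (ss : is_split s) (hkm : arity E <= m) :
  (s \in Q E) = edge M (b (rank_emb s hkm e0)) (b (rank_emb s hkm e1)).
Proof. by rewrite -(grid_uniform_pattern ss hkm M_uniform) edgeE !ffunE. Qed.

Lemma row_edge_shift c (u u' j j' : 'I_m) : u < u' -> j < j' ->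
  edge M (b (c, j)) (b (c, j')) -> edge M (b (c, u)) (b (c, u')).
Proof.
move=> hu hj.
have hpair x y : edge M (b x) (b y)
    = injectiveb (epair x y) && (split_pull (grid_split l m) (epair x y) \in Q E).
  by rewrite edge_epair -M_uniform; congr holds; apply/ffunP => r; rewrite !ffunE; case: ifP.
have inj_row (x x' : 'I_m) : x < x' -> injectiveb (epair (c, x) (c, x')).
  by move=> hx; rewrite injectiveb_E !ffunE eqxx e1_neq_e0 xpair_eqE eqxx /= neq_ltn hx.
rewrite !hpair !inj_row //=.
suff -> : split_pull (grid_split l m) (epair (c, u) (c, u'))
        = split_pull (grid_split l m) (epair (c, j) (c, j')) by [].
congr pair; apply/ffunP.
  by move=> r; rewrite !ffunE; case: (arity_E_cases r) => ->.
move=> [r r']; rewrite !ffunE /=.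
case: (arity_E_cases r) => ->; case: (arity_E_cases r') => ->;
  rewrite ?ffunE eqxx ?e1_neq_e0 /= ?leqnn ?(ltnW hu) ?(ltnW hj) //.
by rewrite leqNgt hu leqNgt hj.
Qed.

Hypothesis M_sym : forall x y, edge M x y = edge M y x.

Lemma row_clique c (x y : 'I_m) : x != y -> edge M (b (c, x)) (b (c, y)) ->
  forall u u' : 'I_m, u != u' -> edge M (b (c, u)) (b (c, u')).
Proof.
wlog xy : x y / x < y.
  move=> hw nxy; case: (ltngtP x y) => [lt|gt|/val_inj eq].
  - exact: hw.
  - by rewrite M_sym; apply: hw gt _; rewrite eq_sym.
  - by move: nxy; rewrite eq eqxx.
move=> _ hxy u u' nuu; case: (ltngtP u u') => [lt|gt|/val_inj eq].
- exact: row_edge_shift lt xy hxy.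
- by rewrite M_sym; apply: row_edge_shift gt xy hxy.
- by move: nuu; rewrite eq eqxx.
Qed.
End GridEdges.

Variable F : sfamily L.

(* If all [E]-complete patterns are realised in [F], then [E]-cliques in
   [F]-free structures are bounded: the uniform grid found in a clique would
   have an [E]-complete pattern. *)
Lemma no_large_clique : C_sub_U1 E F -> exists R, forall n (M : struct L 'I_n),
  Forb F M -> forall w : nat -> 'I_n,
  ~ (forall y y', y < R -> y' < R -> y != y' -> edge M (w y) (w y')).
Proof.
move=> hC; have [B hB] := Forb_subgrid hC.
have hkm : arity E <= B.+2 by rewrite E_binary.
have [R hR] := hB B.+2 (leqW (leqnSn B)).
exists R => n M FM w hw.
have ainj : array_inj (fun _ : 'I_1 => w) R.
  move=> i i' y y' hy hy' /= e; split; first by rewrite (ord1 i) (ord1 i').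
  have [//|ne] := eqVneq y y'.
  have := hw y y' hy hy' ne; move: (w y) e => x <-.
  by rewrite (edge_irrefl x FM.1).
have [Q [b [vQ binj hba hb nC]]] := hR n M FM _ ainj.
apply: nC; split => //; apply/setP => s; rewrite inE.
case: (boolP (is_split s)) => ss; last by apply/negbTE; apply: contra ss; apply: vQ.
rewrite (grid_edge_pattern hb ss hkm).
have [y0 hy0 e0y] := hba (rank_emb s hkm e0).
have [y1 hy1 e1y] := hba (rank_emb s hkm e1).
rewrite e0y e1y; apply: hw => //; apply/eqP => ey.
have : b (rank_emb s hkm e0) = b (rank_emb s hkm e1) by rewrite e0y e1y ey.
by move/binj/(rank_emb_inj ss)/eqP; rewrite eq_sym e1_neq_e0.
Qed.

Lemma edge_uniform_turan l n (Q : pattern L l) (col : {ffun 'I_n -> 'I_l}) i j :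
  E_turan E Q -> edge (uniform_struct Q (colour_split col)) i j = (col i != col j).
Proof.
case=> _ hQ; rewrite edge_epair holds_uniform_struct hQ inE.
rewrite !injectiveb_E !ffunE eqxx e1_neq_e0.
case: (eqVneq i j) => [->|nij] /=; first by rewrite eqxx.
rewrite split_pull_split ?colour_split_split //.
by apply/injectiveP; rewrite injectiveb_E !ffunE eqxx e1_neq_e0.
Qed.

Lemma edge_uniform_complete n (Q : pattern L 1) (col : {ffun 'I_n -> 'I_1}) i j :
  E_complete E Q -> edge (uniform_struct Q (colour_split col)) i j = (i != j).
Proof.
case=> _ hQ; rewrite edge_epair holds_uniform_struct hQ inE.
rewrite injectiveb_E !ffunE eqxx e1_neq_e0.
case: (eqVneq i j) => [->|nij] //=; rewrite split_pull_split ?colour_split_split //.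
by apply/injectiveP; rewrite injectiveb_E !ffunE eqxx e1_neq_e0.
Qed.

Lemma turan_lower l (Q : pattern L l) : 0 < l -> E_turan E Q -> ~ in_U F Q ->
  chi_good (forb_theory F) (Eformula E) l.
Proof.
move=> l0 ET nU n; pose col := [ffun v : 'I_n => Ordinal (ltn_pmod v l0)].
exists (uniform_struct Q (colour_split col)); split.
  exact: uniform_struct_Forb ET.1 (colour_split_split col) nU.
exists id; split => // i j; rewrite /turan_edge /interp_edge -/(edge _ i j) => hij.
rewrite edge_uniform_turan // !ffunE -val_eqE /= hij andbT.
by apply: contraNneq hij => ->.
Qed.

Lemma complete_lower (Q : pattern L 1) : E_complete E Q -> ~ in_U F Q ->
  forall l, chi_good (forb_theory F) (Eformula E) l.
Proof.
move=> EC nU l n; pose col := [ffun v : 'I_n => (ord0 : 'I_1)].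
exists (uniform_struct Q (colour_split col)); split.
  exact: uniform_struct_Forb EC.1 (colour_split_split col) nU.
exists id; split => // i j hij; rewrite /interp_edge -/(edge _ i j).
by rewrite edge_uniform_complete // andbb; apply: contraNneq hij => ->.
Qed.

Hypothesis E_sym : forall n (M : struct L 'I_n), Forb F M ->
  forall x y, edge M x y = edge M y x.

(* If moreover all [E]-Turan [l]-patterns are realised in [F], then [F]-free
   structures contain no large array with edges between any two cells of
   different rows: the pattern of a uniform grid inside it would be
   [E]-Turan, as an edge within a row would give a large clique. *)
Lemma no_large_blowup l : C_sub_U1 E F -> T_sub_U E F l ->
  exists R, forall n (M : struct L 'I_n), Forb F M ->
  forall a : 'I_l -> nat -> 'I_n, array_inj a R ->
  ~ (forall i i' y y', i != i' -> y < R -> y' < R -> edge M (a i y) (a i' y')).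
Proof.
move=> hC hT; have [R1 hR1] := no_large_clique hC.
have [B hB] := Forb_subgrid hT.
pose m := (B + R1).+2.
have hkm : arity E <= m by rewrite E_binary.
have [R hR] := hB m (leq_trans (leq_addr R1 B) (leqW (leqnSn _))).
exists R => n M FM a ainj hcross.
have [Q [b [vQ binj hba hb nT]]] := hR n M FM a ainj.
apply: nT; split => //; apply/setP => s; rewrite inE.
case: (boolP (is_split s)) => ss; last by apply/negbTE; apply: contra ss; apply: vQ.
rewrite (grid_edge_pattern hb ss hkm) /= injectiveb_E.
set v0 := rank_emb s hkm e0; set v1 := rank_emb s hkm e1.
have v01 : v0 != v1 by apply/eqP => /(rank_emb_inj ss)/eqP; rewrite eq_sym e1_neq_e0.
case: (eqVneq (s.1 e0) (s.1 e1)) => [same|diff] /=; last first.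
  by have [y0 hy0 ->] := hba v0; have [y1 hy1 ->] := hba v1; apply: hcross.
apply/negbTE/negP => hedge; pose c := s.1 e0.
have ev0 : v0 = (c, v0.2) by [].
have ev1 : v1 = (c, v1.2) by rewrite /v1 /rank_emb /= -same.
have n01 : v0.2 != v1.2 by apply: contraNneq v01 => e; rewrite ev0 ev1 e.
have hrow : edge M (b (c, v0.2)) (b (c, v1.2)) by rewrite -ev0 -ev1.
have clique := row_clique hb (E_sym FM) n01 hrow.
have hR1m : R1 < m by rewrite /m; lia.
apply: (hR1 n M FM (fun y => b (c, inord y))) => y y' hy hy' nyy.
apply: clique; apply: contra nyy => /eqP /(congr1 val) /=.
by rewrite !inordK ?(ltn_trans hy hR1m) ?(ltn_trans hy' hR1m) // => ->.
Qed.

(* If all [E]-complete patterns are realised in [F], then so are all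
   [E]-Turan [l]-patterns for [l] beyond the clique bound: otherwise the
   uniform structure on [l] singleton parts would be an [F]-free clique. *)
Lemma turan_level_exists : C_sub_U1 E F -> exists l, 0 < l /\ T_sub_U E F l.
Proof.
move=> hC; have [R hR] := no_large_clique hC.
exists R.+1; split => // Q ET; apply: NNPP => nU.
pose col := [ffun v : 'I_R.+1 => v].
have FM := uniform_struct_Forb ET.1 (colour_split_split col) nU.
apply: (hR _ _ FM (fun y => inord y)) => y y' hy hy' nyy.
rewrite edge_uniform_turan // !ffunE; apply: contra nyy => /eqP /(congr1 val).
by rewrite /= !inordK ?(leqW hy) ?(leqW hy') // => ->.
Qed.

(* Upper bound: if all [E]-Turan [ls]-patterns are realised in [F], then no
   [l >= ls] has all Turan graphs [T_{n,l}] in [F]-free structures, since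
   [T_{n,l}] contains an array with edges across rows. *)
Lemma chi_upper ls : C_sub_U1 E F -> T_sub_U E F ls ->
  forall l, 0 < l -> chi_good (forb_theory F) (Eformula E) l -> l < ls.
Proof.
move=> hC hT l l0 hg; rewrite ltnNge; apply/negP => hls.
have [R hR] := no_large_blowup hC hT.
have [M [FM [h [hinj htur]]]] := hg (R * l).+1.
have hil (i : 'I_ls) : i < l := leq_trans (ltn_ord i) hls.
have hyl (i : 'I_ls) y : y < R -> y * l + i < (R * l).+1.
  by move=> hy; have := hil i; nia.
pose a (i : 'I_ls) (y : nat) : 'I_(R * l).+1 := h (inord (y * l + i)).
apply: (hR _ _ FM a).
  move=> i i' y y' hy hy' /hinj /(congr1 val); rewrite /= !inordK ?hyl //.
  by move/grid_index_inj => [] // -> /val_inj ->.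
move=> i i' y y' nii hy hy'.
have := htur (inord (y * l + i)) (inord (y' * l + i')).
rewrite /turan_edge !inordK ?hyl // !modnMDl !modn_small ?hil //.
by move=> /(_ nii) /andP[].
Qed.

Theorem chi_formula_forb : chi_formula E F (forb_theory F) (Eformula E).
Proof.
split=> [nC|hC].
  have [Q hQ] := not_all_ex_not _ _ nC; have [EC nU] := imply_to_and _ _ hQ.
  by move=> m; exists m.+1; split => //; split => //; apply: complete_lower EC nU _.
have [l1 hl1] := turan_level_exists hC.
have [ls [[ls0 hls] hmin]] := least_witness (P := fun l => 0 < l /\ T_sub_U E F l) hl1.
exists ls; split => //; split; first by move=> l' l0 hl'; apply: hmin.
split => //; split; last by move=> l l0 /(chi_upper hC hls l0) lt; rewrite -ltnS prednK.
case: (posnP ls.-1) => [->|l0]; [by left | right].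
have nT : ~ T_sub_U E F ls.-1.
  by move=> hT; have := hmin _ (conj l0 hT); rewrite -ltnS prednK // ltnn.
have [Q hQ] := not_all_ex_not _ _ nT; have [ET nU] := imply_to_and _ _ hQ.
exact: turan_lower l0 ET nU.
Qed.
End BinaryRelation.

Lemma chi_formula_transfer (L : lang) (E : sym L) (F : sfamily L)
  (L1 : lang) (T1 : forall n, struct L1 'I_n -> Prop) (phi1 : qf2 L1)
  (L2 : lang) (T2 : forall n, struct L2 'I_n -> Prop) (phi2 : qf2 L2) :
  (forall l, chi_good T1 phi1 l <-> chi_good T2 phi2 l) ->
  chi_formula E F T1 phi1 -> chi_formula E F T2 phi2.
Proof.
move=> hg [hinf hfin]; split=> [nC m|hC].
  by have [l [ml [l0 /hg g]]] := hinf nC m; exists l.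
have [l [hl [hmin [c0 [lower upper]]]]] := hfin hC.
exists l; split => //; split => //; split => //; split.
  by case: lower => [->|/hg]; [left|right].
by move=> l' l0 /hg; apply: upper.
Qed.

(* Expanding an [L0]-structure by [E := I(E)] gives a model of [T'], and
   every model of [T'] arises so from its reduct; both preserve the graph. *)
Section Expansion.
Variables (L0 : lang) (phi : qf2 L0).

Definition expand n (N : struct L0 'I_n) : struct (langE L0) 'I_n :=
  [set x : atom (langE L0) 'I_n |
    let: existT o t := x in
    match o return {ffun 'I_(@arity (langE L0) o) -> 'I_n} -> bool with
    | Some P => fun t => holds N t
    | None => fun t => interp_edge phi N (t ord0) (t ord_max)
    end t].

Lemma Eholds_expand n (N : struct L0 'I_n) a b :
  Eholds (expand N) a b = interp_edge phi N a b.
Proof. by rewrite /Eholds /holds inE /= !ffunE. Qed.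

Lemma reduct_expand n (N : struct L0 'I_n) : reduct (expand N) = N.
Proof. by apply/setP => -[P t]; rewrite /reduct /holds !inE. Qed.

Lemma edge_Eholds n (M : struct (langE L0) 'I_n) a b :
  edge (None : sym (langE L0)) M a b = Eholds M a b.
Proof.
by rewrite /edge /Eholds /=; congr holds; apply/ffunP => i; rewrite !ffunE inord_val.
Qed.

Lemma expand_model (T : forall n, struct L0 'I_n -> Prop) n (N : struct L0 'I_n) :
  is_theory T -> open_interp T phi -> T n N -> modelT' T phi (expand N).
Proof.
move=> T_theory phi_interp TN; have hI := phi_interp n N TN.
split; [|split; [|split]].
- move=> [[P|] t]; rewrite inE /=; first exact: (T_theory.1 n N TN (existT _ P t)).
  move=> /andP[ne _] i j; have o2 (k : 'I_2) : k = ord0 \/ k = ord_max.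
    by case: k => [[|[|k]] hk] //; [left|right]; apply: val_inj.
  by case: (o2 i) => ->; case: (o2 j) => -> // e; move: ne; rewrite e eqxx.
- by move=> a b; rewrite !Eholds_expand /interp_edge eq_sym (hI a b).1.
- by rewrite reduct_expand.
move=> a b; rewrite Eholds_expand reduct_expand /interp_edge.
by case: (eqVneq a b) => [->|] //=; rewrite (negbTE (hI b b).2).
Qed.

Lemma chi_good_expansion (T : forall n, struct L0 'I_n -> Prop)
  (F : sfamily (langE L0)) :
  is_theory T -> open_interp T phi ->
  (forall n (M : struct (langE L0) 'I_n), modelT' T phi M <-> Forb F M) ->
  forall l, chi_good (forb_theory F) (Eformula (None : sym (langE L0))) l <->
    chi_good T phi l.
Proof.
move=> T_theory phi_interp hmod l; split=> hg n.
  have [M [FM [h [hinj ht]]]] := hg n.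
  have [_ [_ [TN hE]]] := (hmod n M).2 FM.
  exists (reduct M); split => //; exists h; split => // i j /ht.
  by rewrite /interp_edge -/(edge _ _ _ _) edge_Eholds hE.
have [N [TN [h [hinj ht]]]] := hg n.
exists (expand N); split; first by apply/hmod; apply: expand_model.
exists h; split => // i j /ht; rewrite /interp_edge -/(edge _ _ _ _) edge_Eholds.
by rewrite Eholds_expand /interp_edge => /andP[-> ->].
Qed.
End Expansion.

Theorem theorem3p2 :
  (* Main statement: T' = (T_Graph U T) + (E <-> I(E)) = Forb(F). *)
  (forall (L0 : lang) (T : forall n, struct L0 'I_n -> Prop) (phi : qf2 L0)
          (F : sfamily (langE L0)),
      is_theory T ->
      open_interp T phi ->
      canonical_family F ->
      (forall n (M : struct (langE L0) 'I_n), modelT' T phi M <-> Forb F M) ->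
      chi_formula (None : sym (langE L0)) F T phi)
  /\
  (* Furthermore: T over L containing a binary E, models of T are graphs in E,
     I(E)(x,y) = E(x,y), and T = Forb(F). *)
  (forall (L : lang) (E : sym L) (T : forall n, struct L 'I_n -> Prop)
          (F : sfamily L),
      arity E = 2 ->
      is_theory T ->
      (forall n (N : struct L 'I_n), T n N -> forall a b : 'I_n,
          eval_qf N (env2 a b) (Eformula E) = eval_qf N (env2 b a) (Eformula E)) ->
      canonical_family F ->
      (forall n (M : struct L 'I_n), T n M <-> Forb F M) ->
      chi_formula E F T (Eformula E)).
Proof.
split.
  move=> L0 T phi F hT hphi _ hmod.
  apply: chi_formula_transfer (chi_good_expansion hT hphi hmod) _.
  have E_binary : arity (None : sym (langE L0)) = 2 by [].
  apply: (chi_formula_forb E_binary) => n M /hmod [_ [hsym _]] a b.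
  by rewrite !edge_Eholds hsym.
move=> L E T F hE _ hsym _ hTF.
apply: chi_formula_transfer (chi_formula_forb hE _) => [l|n M /hTF]; last exact: hsym.
by split=> hg n; have [M [hM ht]] := hg n; exists M; split => //; apply/hTF.
Qed.
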